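(* Let $p_1,p_2$ be non-negative integers with $p_1+p_2$ odd. Then $$\sum_{j_1=0}^{p_1}\sum_{j_2=0}^{p_2}\binom{p_1}{j_1}\binom{p_2}{j_2}(-1)^{j_1+j_2}B_{p_1-j_1}B_{p_2-j_2}B_{j_1+j_2}=0,$$ where $B_j$ are the Bernoulli numbers.
   Context: The Bernoulli numbers $B_j$ are defined by $\frac{t}{e^t-1}=\sum_{j\ge0}B_j\frac{t^j}{j!}$ (so $B_1=-1/2$). *)

From mathcomp Require Import all_boot all_order all_algebra.
Set Implicit Arguments. Unset Strict Implicit. Unset Printing Implicit Defensive.
Import Order.TTheory GRing.Theory Num.Theory.
Local Open Scope ring_scope.

(* Bernoulli numbers (rational), convention B_1 = -1/2, i.e. the
   coefficients of t/(e^t - 1) = sum_j B_j t^j / j!.  Comparing coefficients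
   of t^(n+1) in (e^t - 1) * sum_j B_j t^j/j! = t gives B_0 = 1 and, for n >= 1,
   sum_{k=0}^{n} C(n+1,k) B_k = 0, i.e.
   B_n = - 1/(n+1) * sum_{k<n} C(n+1,k) B_k.
   bern_seq n is the list [B_0; ...; B_n]. *)
Fixpoint bern_seq (n : nat) : seq rat :=
  match n with
  | 0 => [:: 1]
  | m.+1 =>
      let s := bern_seq m in
      rcons s (- (m.+2%:R)^-1 * \sum_(k < m.+1) ('C(m.+2, k))%:R * s`_k)
  end.

Definition bernoulli (n : nat) : rat := (bern_seq n)`_n.

Lemma bernoulli0 : bernoulli 0 = 1. Proof. by []. Qed.

From mathcomp Require Import all_boot all_order all_algebra.
From mathcomp Require Import ring lra zify.
Import GRing.Theory Num.Theory.
Local Open Scope ring_scope.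

(* Let beta(t) = t/(e^t - 1) = sum_n B_n t^n/n!.  The sum is p1! p2! times the
   coefficient of x^p1 y^p2 in G(x, y) = beta(x) beta(y) beta(-x-y).  Applying
   beta(-t) = e^t beta(t) at t = x, y, x + y and using e^(x+y) = e^x e^y gives
   G(-x, -y) = G(x, y), so the coefficients of odd total degree vanish.  Power
   series are handled as polynomials, equalities holding modulo all monomials
   of (total) degree at least N. *)

Lemma size_bern_seq n : size (bern_seq n) = n.+1.
Proof. by elim: n => //= n IH; rewrite size_rcons IH. Qed.

Lemma nth_bern_seq n k : (k <= n)%N -> (bern_seq n)`_k = bernoulli k.
Proof.
elim: n k => [|n IH] k hk; first by move: hk; rewrite leqn0 => /eqP->.
rewrite /= nth_rcons size_bern_seq.
case: ltnP => hkn; first by rewrite IH.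
have -> : k = n.+1 by apply/eqP; rewrite eqn_leq hk hkn.
by rewrite eqxx /bernoulli /= nth_rcons size_bern_seq ltnn eqxx.
Qed.

Lemma bernoulliS n : bernoulli n.+1 =
  - (n.+2%:R)^-1 * \sum_(k < n.+1) 'C(n.+2, k)%:R * bernoulli k.
Proof.
rewrite /bernoulli [bern_seq n.+1]/= nth_rcons size_bern_seq ltnn eqxx.
congr (_ * _); apply: eq_bigr => k _.
by rewrite -/(bernoulli k) nth_bern_seq // -ltnS.
Qed.

Lemma sum_bin_bernoulli n : (1 < n)%N ->
  \sum_(k < n) 'C(n, k)%:R * bernoulli k = 0.
Proof.
case: n => [|[|n]] // _; rewrite big_ord_recr /= binSn bernoulliS.
have n2_neq0 : n.+2%:R != 0 :> rat by rewrite pnatr_eq0.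
by rewrite mulNr mulrN mulrA mulrV // mul1r subrr.
Qed.

Lemma fact_neq0 n : n`!%:R != 0 :> rat.
Proof. by rewrite pnatr_eq0 -lt0n fact_gt0. Qed.

Lemma bin_invfact n k : (k <= n)%N ->
  (k`!%:R)^-1 * ((n - k)`!%:R)^-1 = 'C(n, k)%:R / n`!%:R :> rat.
Proof.
move=> hk; rewrite -(bin_fact hk) !natrM.
have := fact_neq0 k; have := fact_neq0 (n - k); have : 'C(n, k)%:R != 0 :> rat.
  by rewrite pnatr_eq0 -lt0n bin_gt0.
move: ('C(n, k)%:R) (k`!%:R) ((n - k)`!%:R) => c a b hc hb ha.
by field; rewrite hc ha hb.
Qed.

Definition conv (a b : nat -> rat) n := \sum_(k < n.+1) a k * b (n - k)%N.

Definition signed (a : nat -> rat) n := (-1) ^+ n * a n.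

Definition bern_egf n := bernoulli n / n`!%:R.
Definition exp_egf n : rat := (n`!%:R)^-1.
(* Coefficients of (e^t - 1) / t. *)
Definition expm1_div_egf n : rat := (n.+1`!%:R)^-1.

Lemma conv_signed a b n : conv (signed a) (signed b) n = signed (conv a b) n.
Proof.
rewrite /signed /conv mulr_sumr; apply: eq_bigr => k _.
have hk : (k <= n)%N by rewrite -ltnS.
have -> : (-1) ^+ n = (-1) ^+ k * (-1) ^+ (n - k) :> rat by rewrite -exprD subnKC.
by ring.
Qed.

Lemma conv_bern_expm1 n : conv bern_egf expm1_div_egf n = (n == 0)%:R.
Proof.
case: n => [|n].
  by rewrite /conv big_ord1 /bern_egf /expm1_div_egf bernoulli0 /= !invr1 !mulr1.
rewrite -[RHS](mulr0 (n.+2`!%:R)^-1) -(@sum_bin_bernoulli n.+2) // mulr_sumr.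
apply: eq_bigr => k _; have hk : (k <= n.+2)%N by apply: ltnW.
rewrite /bern_egf /expm1_div_egf -subSn; last by rewrite -ltnS.
rewrite -mulrA bin_invfact //.
by ring.
Qed.

Lemma sum_sign_bin n : \sum_(k < n.+1) (-1) ^+ (n - k) * 'C(n.+1, k)%:R = 1 :> rat.
Proof.
have : ((-1) + 1) ^+ n.+1 = 0 :> rat by rewrite addNr expr0n.
rewrite exprDn big_ord_recr /= subnn binn expr0 mul1r expr1n mulr1n.
move=> /eqP; rewrite addr_eq0 => /eqP alt.
rewrite -[RHS]opprK -[in RHS]alt -sumrN; apply: eq_bigr => k _.
have hk : (k <= n)%N by rewrite -ltnS.
by rewrite expr1n mulr1 -mulr_natr subSn // exprS; ring.
Qed.

Lemma conv_exp_expm1 n :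
  conv exp_egf (signed expm1_div_egf) n = expm1_div_egf n.
Proof.
rewrite -[RHS]mulr1 -(sum_sign_bin n) mulr_sumr; apply: eq_bigr => k _.
have hk : (k <= n.+1)%N by apply: ltnW.
rewrite /exp_egf /signed /expm1_div_egf -subSn; last by rewrite -ltnS.
by rewrite mulrCA bin_invfact //; ring.
Qed.

Section Truncation.
Context {R : nzRingType}.

Definition vanishes_below N (p : {poly R}) := forall i, (i < N)%N -> p`_i = 0.

Lemma vanishes_belowD N p q :
  vanishes_below N p -> vanishes_below N q -> vanishes_below N (p + q).
Proof. by move=> hp hq i hi; rewrite coefD hp ?hq ?addr0. Qed.

Lemma vanishes_belowN N p : vanishes_below N p -> vanishes_below N (- p).
Proof. by move=> hp i hi; rewrite coefN hp ?oppr0. Qed.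

Lemma vanishes_belowB N p q :
  vanishes_below N p -> vanishes_below N q -> vanishes_below N (p - q).
Proof. by move=> hp hq; apply: vanishes_belowD => //; apply: vanishes_belowN. Qed.

Lemma vanishes_belowMr N p q : vanishes_below N q -> vanishes_below N (p * q).
Proof.
move=> hq i hi; rewrite coefMr big1 // => j _.
by rewrite hq ?mulr0 //; apply: leq_ltn_trans hi; rewrite -ltnS.
Qed.

(* Total-degree truncation of bivariate polynomials: [f`_j`_i] is the
   coefficient of [x^i y^j], where [x] is the inner variable. *)
Definition vanishes_below2 N (f : {poly {poly R}}) :=
  forall i j, (i + j < N)%N -> f`_j`_i = 0.

Lemma vanishes_below2D N f g :
  vanishes_below2 N f -> vanishes_below2 N g -> vanishes_below2 N (f + g).
Proof. by move=> hf hg i j h; rewrite !coefD hf ?hg ?addr0. Qed.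

Lemma vanishes_below2N N f : vanishes_below2 N f -> vanishes_below2 N (- f).
Proof. by move=> hf i j h; rewrite !coefN hf ?oppr0. Qed.

Lemma vanishes_below2B N f g :
  vanishes_below2 N f -> vanishes_below2 N g -> vanishes_below2 N (f - g).
Proof. by move=> hf hg; apply: vanishes_below2D => //; apply: vanishes_below2N. Qed.

Lemma vanishes_below2W M N f :
  (M <= N)%N -> vanishes_below2 N f -> vanishes_below2 M f.
Proof. by move=> hMN hf i j h; apply: hf; apply: leq_trans hMN. Qed.

Lemma vanishes_below2M M N f g :
  vanishes_below2 M f -> vanishes_below2 N g -> vanishes_below2 (M + N) (f * g).
Proof.
move=> hf hg i j h; rewrite coefM coef_sum big1 // => j' _.
rewrite coefM big1 // => i' _.
have hj : (j' <= j)%N by rewrite -ltnS.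
have hi : (i' <= i)%N by rewrite -ltnS.
case: (ltnP (i' + j') M) => hM; first by rewrite hf ?mul0r.
by rewrite hg ?mulr0 //; lia.
Qed.

Lemma vanishes_below2Ml N f g : vanishes_below2 N f -> vanishes_below2 N (f * g).
Proof. by move=> hf; rewrite -[N]addn0; apply: vanishes_below2M. Qed.

Lemma vanishes_below2Mr N f g : vanishes_below2 N g -> vanishes_below2 N (f * g).
Proof. by move=> hg; rewrite -[N]add0n; apply: vanishes_below2M. Qed.

Lemma vanishes_below2X N u : vanishes_below2 1 u -> vanishes_below2 N (u ^+ N).
Proof.
move=> hu; elim: N => [|N IH]; first by [].
by rewrite exprS -add1n; apply: vanishes_below2M.
Qed.

End Truncation.

Section Series.
Variable N : nat.

Definition series (a : nat -> rat) : {poly rat} := \poly_(i < N) a i.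

Lemma coef_seriesM a b n :
  (n < N)%N -> (series a * series b)`_n = conv a b n.
Proof.
move=> hn; rewrite coefM; apply: eq_bigr => k _.
have hk : (k < N)%N by apply: leq_ltn_trans hn; rewrite -ltnS.
by rewrite !coef_poly hk (leq_ltn_trans (leq_subr _ _) hn).
Qed.

Lemma vanishes_below_seriesM a b (q : {poly rat}) :
  (forall n, (n < N)%N -> conv a b n = q`_n) ->
  vanishes_below N (series a * series b - q).
Proof. by move=> habq n hn; rewrite coefB coef_seriesM // habq ?subrr. Qed.

(* beta(-t) = e^t beta(t): with D(t) = (e^t - 1)/t one has beta D = 1,
   beta(-t) D(-t) = 1 and e^t D(-t) = D(t), so both sides invert D(-t). *)
Lemma bern_egf_signed :
  vanishes_below N (series (signed bern_egf) - series exp_egf * series bern_egf).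
Proof.
set bm := series (signed bern_egf); set e := series exp_egf.
set b := series bern_egf; set D := series expm1_div_egf.
set Dm := series (signed expm1_div_egf).
have inv_D : vanishes_below N (b * D - 1).
  by apply: vanishes_below_seriesM => n _; rewrite conv_bern_expm1 coef1.
have inv_Dm : vanishes_below N (bm * Dm - 1).
  apply: vanishes_below_seriesM => n _.
  rewrite conv_signed /signed conv_bern_expm1 coef1.
  by case: n => [|m]; rewrite ?mulr0 ?mulr1.
have exp_Dm : vanishes_below N (e * Dm - D).
  by apply: vanishes_below_seriesM => n hn; rewrite conv_exp_expm1 coef_poly hn.
have -> : bm - e * b =
    - (bm * b * (e * Dm - D)) - bm * (b * D - 1) + e * b * (bm * Dm - 1) by ring.
apply: vanishes_belowD; last exact: vanishes_belowMr.
by apply: vanishes_belowB; [apply: vanishes_belowN|]; apply: vanishes_belowMr.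
Qed.

End Series.

Notation bipoly := {poly {poly rat}}.

Definition xvar : bipoly := 'X%:P.
Definition yvar : bipoly := 'X.

Definition subst (u : bipoly) (p : {poly rat}) : bipoly :=
  (map_poly (polyC \o polyC) p).[u].

Lemma substM u p q : subst u (p * q) = subst u p * subst u q.
Proof. by rewrite /subst rmorphM hornerM. Qed.

Lemma substB u p q : subst u (p - q) = subst u p - subst u q.
Proof. by rewrite /subst rmorphB hornerD hornerN. Qed.

Lemma vanishes_below2_subst N u p : vanishes_below2 1 u ->
  vanishes_below N p -> vanishes_below2 N (subst u p).
Proof.
move=> hu hp; rewrite /subst horner_coef.
apply: (big_ind (vanishes_below2 N)) => [i j _|f g|i _]; rewrite ?coef0 //.
  exact: vanishes_below2D.
rewrite coef_map /=; case: (ltnP i N) => hi.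
  by rewrite hp // !polyC0 mul0r => ? ? _; rewrite !coef0.
by apply/vanishes_below2Mr/(vanishes_below2W _ _ _ hi)/vanishes_below2X.
Qed.

Lemma subst_series N u a : subst u (series N a) = \sum_(i < N) (a i)%:P%:P * u ^+ i.
Proof.
rewrite /subst.
have -> : map_poly (polyC \o polyC) (series N a) = \poly_(i < N) ((a i)%:P%:P : bipoly).
  apply/polyP => i.
  by rewrite coef_map !coef_poly; case: ifP => //= _; rewrite !polyC0.
by rewrite horner_poly.
Qed.

Lemma vanishes_below2_xvar : vanishes_below2 1 xvar.
Proof. by move=> [|i] [|j] //= _; rewrite coefC /= coefX. Qed.

Lemma vanishes_below2_yvar : vanishes_below2 1 yvar.
Proof. by move=> [|i] [|j] //= _; rewrite coefX /= coef0. Qed.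

Lemma vanishes_below2_addXY : vanishes_below2 1 (xvar + yvar).
Proof. exact: vanishes_below2D vanishes_below2_xvar vanishes_below2_yvar. Qed.

Lemma coef_subst_xy N a b i j : (i < N)%N -> (j < N)%N ->
  (subst xvar (series N a) * subst yvar (series N b))`_j`_i = a i * b j.
Proof.
move=> hi hj; rewrite !subst_series.
have -> : \sum_(k < N) (a k)%:P%:P * xvar ^+ k = (series N a)%:P.
  rewrite /series poly_def rmorph_sum; apply: eq_bigr => k _.
  by rewrite -rmorphXn -rmorphM mul_polyC.
have -> : \sum_(k < N) (b k)%:P%:P * yvar ^+ k = \poly_(k < N) (b k)%:P.
  by rewrite poly_def; apply: eq_bigr => k _; rewrite mul_polyC.
by rewrite coefCM coef_poly hj coefMC coef_poly hi.
Qed.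

Lemma coef_addXY_exp n i j :
  ((xvar + yvar) ^+ n)`_j`_i = if (i + j == n)%N then 'C(n, j)%:R else 0.
Proof.
rewrite exprDn coef_sum coef_sum.
have term k : ((xvar ^+ (n - k) * yvar ^+ k) *+ 'C(n, k))`_j`_i
    = if (k == j) && (i == n - k)%N then 'C(n, k)%:R else 0.
  rewrite coefMn coefMn /xvar /yvar -rmorphXn coefCM coefXn (eq_sym j).
  case: (k == j); last by rewrite /= mulr0 coef0 mul0rn.
  by rewrite /= mulr1 coefXn; case: (i == n - k)%N; rewrite ?mul0rn.
under eq_bigr => k _ do rewrite term.
case: (ltnP n j) => hnj.
  rewrite big1 => [|k _]; first by case: eqP => //; lia.
  by rewrite ifF //; apply/andP => -[/eqP hk _]; move: (ltn_ord k); lia.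
rewrite (bigD1 (Ordinal (hnj : (j < n.+1)%N))) //= eqxx big1 ?addr0 => [|k hk].
  by have -> : (i + j == n)%N = (i == n - j)%N by apply/eqP/eqP; lia.
rewrite ifF //; apply/negbTE; apply: contra hk => /andP[/eqP hkj _].
by apply/eqP/val_inj.
Qed.

Lemma coef_subst_addXY N c i j : (i + j < N)%N ->
  (subst (xvar + yvar) (series N c))`_j`_i = c (i + j)%N * 'C(i + j, j)%:R.
Proof.
move=> hij; rewrite subst_series coef_sum coef_sum.
under eq_bigr => n _ do rewrite coefCM coefCM coef_addXY_exp.
rewrite (bigD1 (Ordinal hij)) //= eqxx big1 ?addr0 // => k hk.
rewrite ifF ?mulr0 //; apply/negbTE; apply: contra hk => /eqP hk.
by apply/eqP/val_inj.
Qed.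

Lemma exp_egf_addXY N : vanishes_below2 N (subst (xvar + yvar) (series N exp_egf)
  - subst xvar (series N exp_egf) * subst yvar (series N exp_egf)).
Proof.
move=> i j hij; rewrite !coefB coef_subst_addXY // coef_subst_xy; try lia.
have := bin_invfact _ _ (leq_addl i j); rewrite addnK => binE.
by rewrite /exp_egf mulrC -binE mulrC subrr.
Qed.

(* The coefficient of [x^p1 y^p2] in [c(x + y) a(x) a(y)]. *)
Definition xy_conv (c a : nat -> rat) p1 p2 :=
  \sum_(j2 < p2.+1) \sum_(j1 < p1.+1)
    c (j1 + j2)%N * 'C(j1 + j2, j2)%:R * (a (p1 - j1)%N * a (p2 - j2)%N).

Lemma coef_subst_xy_conv N c a p1 p2 : (p1 + p2 < N)%N ->
  (subst (xvar + yvar) (series N c) *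
   (subst xvar (series N a) * subst yvar (series N a)))`_p2`_p1
  = xy_conv c a p1 p2.
Proof.
move=> hN; rewrite coefM coef_sum; apply: eq_bigr => j2 _.
rewrite (coefM _ _ p1); apply: eq_bigr => j1 _.
have h1 : (j1 <= p1)%N by rewrite -ltnS.
have h2 : (j2 <= p2)%N by rewrite -ltnS.
by rewrite coef_subst_addXY ?coef_subst_xy //; lia.
Qed.

Lemma xy_conv_signed c a p1 p2 :
  xy_conv c (signed a) p1 p2 = (-1) ^+ (p1 + p2) * xy_conv (signed c) a p1 p2.
Proof.
rewrite /xy_conv mulr_sumr; apply: eq_bigr => j2 _.
rewrite mulr_sumr; apply: eq_bigr => j1 _.
have h1 : (j1 <= p1)%N by rewrite -ltnS.
have h2 : (j2 <= p2)%N by rewrite -ltnS.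
have signE : (-1) ^+ (p1 + p2) * (-1) ^+ (j1 + j2) =
    (-1) ^+ (p1 - j1) * (-1) ^+ (p2 - j2) :> rat.
  rewrite -!exprD (_ : (p1 + p2 + (j1 + j2) = p1 - j1 + (p2 - j2) + (j1 + j2) * 2)%N).
    by rewrite exprD exprM sqrr_sign mulr1.
  by lia.
rewrite /signed; set C := 'C(_, _)%:R.
transitivity ((-1) ^+ (p1 - j1) * (-1) ^+ (p2 - j2) *
  (c (j1 + j2)%N * C * (a (p1 - j1)%N * a (p2 - j2)%N))); first by ring.
by rewrite -signE; ring.
Qed.

Lemma bern_egf_subst N u : vanishes_below2 1 u ->
  vanishes_below2 N (subst u (series N (signed bern_egf))
    - subst u (series N exp_egf) * subst u (series N bern_egf)).
Proof.
move=> hu; rewrite -substM -substB.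
exact: vanishes_below2_subst hu (bern_egf_signed N).
Qed.

(* The generating function beta(x) beta(y) beta(-x-y) is even. *)
Lemma xy_conv_bern_sym p1 p2 :
  xy_conv (signed bern_egf) bern_egf p1 p2 = xy_conv bern_egf (signed bern_egf) p1 p2.
Proof.
set N := (p1 + p2).+1.
have KX := bern_egf_subst N _ vanishes_below2_xvar.
have KY := bern_egf_subst N _ vanishes_below2_yvar.
have KZ := bern_egf_subst N _ vanishes_below2_addXY.
have EX := exp_egf_addXY N.
set Xb := subst xvar (series N bern_egf) in KX *.
set Xm := subst xvar (series N (signed bern_egf)) in KX *.
set Xe := subst xvar (series N exp_egf) in KX EX *.
set Yb := subst yvar (series N bern_egf) in KY *.
set Ym := subst yvar (series N (signed bern_egf)) in KY *.
set Ye := subst yvar (series N exp_egf) in KY EX *.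
set Zb := subst (xvar + yvar) (series N bern_egf) in KZ *.
set Zm := subst (xvar + yvar) (series N (signed bern_egf)) in KZ *.
set Ze := subst (xvar + yvar) (series N exp_egf) in KZ EX *.
have even : vanishes_below2 N (Zm * (Xb * Yb) - Zb * (Xm * Ym)).
  have -> : Zm * (Xb * Yb) - Zb * (Xm * Ym) =
    (Zm - Ze * Zb) * (Xb * Yb) + (Ze - Xe * Ye) * (Zb * Xb * Yb)
    - Zb * ((Xm - Xe * Xb) * Ym + Xe * Xb * (Ym - Ye * Yb)) by ring.
  apply: vanishes_below2B.
    exact/vanishes_below2D/vanishes_below2Ml/EX/vanishes_below2Ml.
  apply/vanishes_below2Mr/vanishes_below2D.
    exact: vanishes_below2Ml.
  exact: vanishes_below2Mr.
apply/eqP; rewrite -subr_eq0; apply/eqP.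
by rewrite -!(coef_subst_xy_conv N) // -!coefB even.
Qed.

Lemma bernoulli_sum_xy_conv p1 p2 :
  \sum_(j1 < p1.+1) \sum_(j2 < p2.+1)
    'C(p1, j1)%:R * 'C(p2, j2)%:R * (-1) ^+ (j1 + j2)
    * bernoulli (p1 - j1) * bernoulli (p2 - j2) * bernoulli (j1 + j2)
  = p1`!%:R * p2`!%:R * xy_conv (signed bern_egf) bern_egf p1 p2.
Proof.
rewrite /xy_conv exchange_big mulr_sumr; apply: eq_bigr => j2 _.
rewrite mulr_sumr; apply: eq_bigr => j1 _.
have h1 : (j1 <= p1)%N by rewrite -ltnS.
have h2 : (j2 <= p2)%N by rewrite -ltnS.
have binE n k : (k <= n)%N ->
    'C(n, k)%:R = n`!%:R * ((k`!%:R)^-1 * ((n - k)`!%:R)^-1) :> rat.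
  by move=> hk; rewrite bin_invfact // mulrC divfK ?fact_neq0.
rewrite (binE p1) // (binE p2) // (binE (j1 + j2)%N) ?leq_addl // addnK.
rewrite /signed /bern_egf; field.
by rewrite !fact_neq0.
Qed.

Theorem mainTheorem11 (p1 p2 : nat) : odd (p1 + p2) ->
  \sum_(j1 < p1.+1) \sum_(j2 < p2.+1)
    ('C(p1, j1))%:R * ('C(p2, j2))%:R * (-1) ^+ (j1 + j2)
    * bernoulli (p1 - j1) * bernoulli (p2 - j2) * bernoulli (j1 + j2) = 0 :> rat.
Proof.
move=> odd_p; rewrite bernoulli_sum_xy_conv.
have := xy_conv_bern_sym p1 p2.
rewrite xy_conv_signed -signr_odd odd_p expr1.
set X := xy_conv _ _ p1 p2 => symX.
have -> : X = 0 by lra.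
by rewrite mulr0.
Qed.
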